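(* Let $T$, $\mathcal{S}=\mathcal{S}_+\cup\mathcal{S}_-$, $\lambda,\mu$, $P_\lambda,P_\mu$ be as in the context, and let $\{(Y_n,\kappa_n)\}_{n\ge0}$ be the discrete-time QBD with transition blocks $$C'_{-1}=\frac12\begin{bmatrix}0&P_{\mu+-}\\0&P_{\mu--}\end{bmatrix},\quad C'_0=\frac12\begin{bmatrix}P_{\mu++}&P_{\lambda+-}\\P_{\mu-+}&P_{\lambda--}\end{bmatrix},\quad C'_1=\frac12\begin{bmatrix}P_{\lambda++}&0\\P_{\lambda-+}&0\end{bmatrix},$$ started from $Y_0=1$, $\kappa_0\in\mathcal{S}_+$. Define $\tau_0:=0$ and $\tau_{k+1}:=\min\{n>\tau_k: Y_n\neq Y_{\tau_k}\}$, and set $M_{\tau_k}:=Y_{\tau_k}-1/2$ if $\kappa_{\tau_k}\in\mathcal{S}_+$ and $M_{\tau_k}:=Y_{\tau_k}+1/2$ if $\kappa_{\tau_k}\in\mathcal{S}_-$. Then $\{(M_{\tau_k},\kappa_{\tau_k})\}_{k\in\mathbb{N}}$ is a quasi-birth-death process on $(\mathbb{Z}+1/2)\times\mathcal{S}$ with transition blocks $$D_{-1}=\begin{bmatrix}0&0\\0&F\end{bmatrix},\quad D_0=\begin{bmatrix}0&G\\H&0\end{bmatrix},\quad D_1=\begin{bmatrix}E&0\\0&0\end{bmatrix},$$ where $E\in\mathbb{R}^{|\mathcal{S}_+|\times|\mathcal{S}_+|}$, $F\in\mathbb{R}^{|\mathcal{S}_-|\times|\mathcal{S}_-|}$, $G\in\mathbb{R}^{|\mathcal{S}_+|\times|\mathcal{S}_-|}$,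 $H\in\mathbb{R}^{|\mathcal{S}_-|\times|\mathcal{S}_+|}$ are given by $$\begin{bmatrix}E&G\\H&F\end{bmatrix}=\Big(I-\tfrac12\begin{bmatrix}P_{\mu++}&P_{\lambda+-}\\P_{\mu-+}&P_{\lambda--}\end{bmatrix}\Big)^{-1}\tfrac12\begin{bmatrix}P_{\lambda++}&P_{\mu+-}\\P_{\lambda-+}&P_{\mu--}\end{bmatrix} =\begin{bmatrix}I-\mu^{-1}T_{++}&-\lambda^{-1}T_{+-}\\-\mu^{-1}T_{-+}&I-\lambda^{-1}T_{--}\end{bmatrix}^{-1}\begin{bmatrix}I+\lambda^{-1}T_{++}&\mu^{-1}T_{+-}\\\lambda^{-1}T_{-+}&I+\mu^{-1}T_{--}\end{bmatrix}.$$
   Context: $T$ is the generator of a continuous-time Markov chain on a finite set $\mathcal{S}=\mathcal{S}_+\cup\mathcal{S}_-$ (disjoint, both nonempty), partitioned into blocks $T_{++},T_{+-},T_{-+},T_{--}$ according to $\mathcal{S}_\pm$. $\lambda,\mu>0$ satisfy $\lambda,\mu\ge\max_i|T_{ii}|$; $P_\lambda:=I+\lambda^{-1}T$, $P_\mu:=I+\mu^{-1}T$ with blocks $P_{\lambda++}$ etc. A discrete-time quasi-birth-death process (QBD) with transition blocks $L_{-1},L_0,L_1$ is a Markov chain $\{(Y_n,\kappa_n)\}$ on $\mathbb{Z}\times\mathcal{S}$ with $\mathbb{P}[Y_n=k+d,\kappa_n=j\mid Y_{n-1}=k,\kappa_{n-1}=i]=(L_d)_{ij}$ for $d\in\{-1,0,1\}$;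 for a QBD on $(\mathbb{Z}+1/2)\times\mathcal{S}$ the levels are shifted by $1/2$ in the same way. Matrices are partitioned into blocks according to $\mathcal{S}_+,\mathcal{S}_-$. *)

From HB Require Import structures.
From mathcomp Require Import all_boot all_order all_algebra.
From mathcomp Require Import all_classical all_reals all_analysis.
Set Implicit Arguments. Unset Strict Implicit. Unset Printing Implicit Defensive.
Import Order.TTheory GRing.Theory Num.Theory.
Local Open Scope ring_scope.

Section QBD.
Variable R : realType.
Variable n : nat.

Definition is_generator (T : 'M[R]_n) : Prop :=
  (forall i j : 'I_n, i != j -> 0 <= T i j) /\
  (forall i : 'I_n, \sum_(j < n) T i j = 0).

Definition Pmat (lam : R) (T : 'M[R]_n) : 'M[R]_n := 1%:M + lam^-1 *: T.

(* One-step transition probability of a QBD with blocks Lm (= L_{-1}),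
   L0, Lp (= L_1), from (level x, phase i) to (level x', phase j).
   Levels are real numbers (covering both Z and Z + 1/2). *)
Definition qbd_tr (Lm L0 Lp : 'M[R]_n) (x : R) (i : 'I_n) (x' : R) (j : 'I_n) : R :=
  if x' == x + 1 then Lp i j
  else if x' == x then L0 i j
  else if x' == x - 1 then Lm i j
  else 0.

(* A finite path of N steps of a QBD on Z x S started from (y0, i0) is encoded
   by w : {ffun 'I_N -> 'I_3 * 'I_n}: step t has level increment
   (w t).1 - 1 in {-1,0,1} and new phase (w t).2. *)
Definition path_level (N : nat) (y0 : int) (w : {ffun 'I_N -> 'I_3 * 'I_n}) (t : nat) : int :=
  y0 + \sum_(s < N | (s < t)%N) ((nat_of_ord (w s).1)%:Z - 1).

Definition path_phase (N : nat) (i0 : 'I_n) (w : {ffun 'I_N -> 'I_3 * 'I_n}) (t : nat) : 'I_n :=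
  match t with
  | 0 => i0
  | t'.+1 => match @insub nat (fun k => (k < N)%N) 'I_N t' with
             | Some s => (w s).2
             | None => i0
             end
  end.

Definition path_prob (Lm L0 Lp : 'M[R]_n) (N : nat) (y0 : int) (i0 : 'I_n)
    (w : {ffun 'I_N -> 'I_3 * 'I_n}) : R :=
  \prod_(t < N) qbd_tr Lm L0 Lp (path_level y0 w t)%:~R (path_phase i0 w t)
                             (path_level y0 w t.+1)%:~R (path_phase i0 w t.+1).

Fixpoint is_tau (y : nat -> int) (k : nat) (m : nat) : bool :=
  match k with
  | 0 => m == 0%N
  | k'.+1 => [exists p : 'I_m, is_tau y k' p && (y m != y p) &&
              [forall t : 'I_m, (p < t)%N ==> (y t == y p)]]
  end.

Definition Mval (Splus : {set 'I_n}) (y : int) (i : 'I_n) : R :=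
  if i \in Splus then y%:~R - 2^-1 else y%:~R + 2^-1.

End QBD.

(* Between two consecutive level changes the chain only uses the
   level-preserving block C'_0, so summing over the length of each sojourn
   turns every level change into one factor of
   K = (I - C'_0)^-1 (C'_{-1} + C'_1) = [E G; H F].  Since C'_{-1} only enters
   S_- and C'_1 only enters S_+, the phases before and after a change tell
   whether Y went down or up, hence whether M = Y -+ 1/2 moved by -1, 0 or +1.
   Analytically, the probability of being in phase i at time N after k level
   changes, all epochs so far matching, satisfies a linear recursion in N; its
   sum over N is a Neumann series, which converges because the rows of C'_0
   sum to less than 1.  Finally I - C'_0 = A/2 and C'_{-1} + C'_1 = B/2. *)

From HB Require Import structures.
From mathcomp Require Import all_boot all_order all_algebra.
From mathcomp Require Import all_classical all_reals all_analysis.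
From mathcomp Require Import ring lra.
Import Order.TTheory GRing.Theory Num.Theory.
Import numFieldNormedType.Exports.
Set Implicit Arguments. Unset Strict Implicit. Unset Printing Implicit Defensive.
Local Open Scope classical_set_scope.
Local Open Scope ring_scope.

Section LevelEpochs.
Variable y : nat -> int.

Definition epoch t := if t is t'.+1 then y t'.+1 != y t' else true.

Fixpoint nchanges t := if t is t'.+1 then (nchanges t' + epoch t'.+1)%N else 0%N.

Lemma nchanges_mono s t : (s <= t)%N -> (nchanges s <= nchanges t)%N.
Proof.
elim: t => [|t IH]; first by rewrite leqn0 => /eqP ->.
rewrite leq_eqVlt ltnS => /predU1P [-> //|/IH st].
exact: leq_trans st (leq_addr _ _).
Qed.

Lemma nchanges_const p t : (p <= t)%N ->
  (forall s, (p <= s <= t)%N -> y s = y p) -> nchanges t = nchanges p.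
Proof.
elim: t => [|t IH]; first by rewrite leqn0 => /eqP ->.
rewrite leq_eqVlt ltnS => /predU1P [-> //|pt] yc.
have pt1 : (p <= t.+1 <= t.+1)%N by rewrite leqnn andbT leqW.
have pt0 : (p <= t <= t.+1)%N by rewrite pt leqnSn.
rewrite /= (yc _ pt1) (yc _ pt0) eqxx addn0 IH // => s /andP [ps st].
by rewrite yc // ps leqW.
Qed.

Lemma last_epoch t : exists p, [/\ (p <= t)%N, epoch p, nchanges p = nchanges t &
  forall s, (p <= s <= t)%N -> y s = y p].
Proof.
elim: t => [|t [p [pt ep np yc]]].
  by exists 0%N; split => // s; rewrite leqn0 => /eqP ->.
have [ch|nch] := boolP (epoch t.+1).
  exists t.+1; split => // s; rewrite -eqn_leq => /eqP -> //.
have ytS : y t.+1 = y t by apply/eqP; rewrite negbK in nch.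
exists p; split; first exact: leqW.
- exact: ep.
- by rewrite /= ytS eqxx addn0.
move=> s /andP [ps]; rewrite leq_eqVlt ltnS => /predU1P [->|st].
  by rewrite ytS yc // pt leqnn.
by rewrite yc // ps.
Qed.

Lemma is_tauE k t : is_tau y k t = (nchanges t == k) && epoch t.
Proof.
elim: k t => [|k IH] [|t] //=.
- by case: (y t.+1 != y t); rewrite ?addn1 ?andbF.
- by apply/existsP => -[[]].
apply/existsP/andP => [[p /andP [/andP [tau_p yp] flat]] | [/eqP nt et]].
  move: tau_p; rewrite IH => /andP [/eqP np _].
  have ycp s : (p <= s <= t)%N -> y s = y p.
    move=> /andP; rewrite leq_eqVlt => -[/predU1P [-> //|ps] st].
    by have /implyP/(_ ps)/eqP := forallP flat (Ordinal (st : (s < t.+1)%N)).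
  have pt : (p <= t)%N by rewrite -ltnS.
  have ytp : y t = y p by rewrite ycp // pt leqnn.
  by rewrite (nchanges_const pt ycp) np ytp yp addn1.
rewrite et addn1 in nt; case: nt => nt.
have [p [pt ep np yc]] := last_epoch t.
exists (Ordinal (pt : (p < t.+1)%N)) => /=.
have yp : y t.+1 != y p by rewrite -(yc t) // pt leqnn.
rewrite IH np nt eqxx ep yp /=.
apply/forallP => s; apply/implyP => ps; apply/eqP.
by apply: yc; rewrite (ltnW ps) -ltnS ltn_ord.
Qed.

End LevelEpochs.

Lemma nchanges_eq (y y' : nat -> int) N : {in [pred t | (t <= N)%N], y =1 y'} ->
  {in [pred t | (t <= N)%N], nchanges y =1 nchanges y'}.
Proof.
move=> yy'; elim=> [//|t IH] tN /=.
by rewrite IH ?inE ?(ltnW tN) // !yy' ?inE // ltnW.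
Qed.

Lemma epoch_eq (y y' : nat -> int) N : {in [pred t | (t <= N)%N], y =1 y'} ->
  {in [pred t | (t <= N)%N], epoch y =1 epoch y'}.
Proof. by move=> yy' [|t] tN //=; rewrite !yy' ?inE // ltnW. Qed.

Section EpochMatching.
Variables (R : realType) (n : nat) (S : {set 'I_n}).
Variables (m : nat -> R) (j : nat -> 'I_n).

Definition mval (x : R) (i : 'I_n) := if i \in S then x - 2^-1 else x + 2^-1.

Definition level_of k := if j k \in S then m k + 2^-1 else m k - 2^-1.

Definition matches x i k := (mval x i == m k) && (i == j k).

Lemma matchesE x i k : matches x i k = (i == j k) && (x == level_of k).
Proof.
rewrite /matches /mval /level_of andbC; have [-> /=|//] := eqVneq i (j k).
by case: (j k \in S); apply/eqP/eqP => ?; lra.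
Qed.

Definition epochs_match (y : nat -> int) (ph : nat -> 'I_n) N :=
  [forall s : 'I_N.+1, epoch y s ==> matches (y s)%:~R (ph s) (nchanges y s)].

Lemma tau_eventE (y : nat -> int) (ph : nat -> 'I_n) (K N : nat) :
  is_tau y K N && [forall k : 'I_K.+1, forall t : 'I_N.+1, is_tau y k t ==>
     ((Mval R S (y t) (ph t) == m k) && (ph t == j k))]
  = [&& nchanges y N == K, epoch y N & epochs_match y ph N].
Proof.
rewrite is_tauE -andbA; have [/eqP nN /= | //] := boolP (nchanges y N == K).
have [eN /= | //] := boolP (epoch y N).
apply/forallP/forallP => [match_tau s | match_ep k].
  apply/implyP => es.
  have sK : (nchanges y s < K.+1)%N by rewrite ltnS -nN nchanges_mono // -ltnS.
  by have /forallP/(_ s) := match_tau (Ordinal sK); rewrite is_tauE eqxx es.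
apply/forallP => t; apply/implyP; rewrite is_tauE => /andP [/eqP <- et].
by move: (match_ep t) => /implyP; apply.
Qed.

Lemma epochs_match_eq (y y' : nat -> int) (ph ph' : nat -> 'I_n) N :
  {in [pred t | (t <= N)%N], y =1 y'} -> {in [pred t | (t <= N)%N], ph =1 ph'} ->
  epochs_match y ph N = epochs_match y' ph' N.
Proof.
move=> yy' pp'; apply: eq_forallb => s; have sN : (s <= N)%N by rewrite -ltnS.
by rewrite (epoch_eq yy') ?yy' ?pp' ?(nchanges_eq yy').
Qed.

Lemma epochs_match0 (y : nat -> int) (ph : nat -> 'I_n) :
  epochs_match y ph 0 = matches (y 0%N)%:~R (ph 0%N) 0.
Proof.
apply/forallP/idP => [ok | ok s]; first exact: ok ord0.
by rewrite (ord1 s); apply/implyP.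
Qed.

Lemma epochs_matchS (y : nat -> int) (ph : nat -> 'I_n) N : epochs_match y ph N.+1 =
  epochs_match y ph N && (epoch y N.+1 ==> matches (y N.+1)%:~R (ph N.+1) (nchanges y N.+1)).
Proof.
apply/forallP/andP => [ok | [/forallP ok okN] s].
  split; last exact: ok ord_max.
  by apply/forallP => s; exact: ok (widen_ord (leqnSn _) s).
have [sN|Ns] := ltnP s N.+1; first exact: ok (Ordinal sN).
have -> : s = ord_max by apply/val_inj/eqP; rewrite eqn_leq Ns -ltnS ltn_ord.
exact: okN.
Qed.

Lemma epochs_match_level (y : nat -> int) (ph : nat -> 'I_n) N :
  epochs_match y ph N -> (y N)%:~R = level_of (nchanges y N).
Proof.
move=> /forallP ok; have [p [pN ep np yc]] := last_epoch y N.
have /implyP/(_ ep) := ok (Ordinal (pN : (p < N.+1)%N)).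
by rewrite matchesE /= np yc ?pN ?leqnn // => /andP [_ /eqP].
Qed.

End EpochMatching.

Section FfunRcons.
Variable A : finType.

Definition ffun_rcons N (w : {ffun 'I_N -> A}) (a : A) : {ffun 'I_N.+1 -> A} :=
  [ffun s : 'I_N.+1 => if insub (val s) is Some s' then w s' else a].

Lemma ffun_rcons_val N w a (s : 'I_N.+1) (s' : 'I_N) :
  val s = val s' -> @ffun_rcons N w a s = w s'.
Proof.
move=> ss'; rewrite ffunE; case: insubP => [s1 _ s1s|]; last by rewrite ss' ltn_ord.
by congr (w _); apply: val_inj; rewrite s1s ss'.
Qed.

Lemma ffun_rcons_widen N w a (s : 'I_N) :
  @ffun_rcons N w a (widen_ord (leqnSn N) s) = w s.
Proof. exact: ffun_rcons_val. Qed.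

Lemma ffun_rcons_last N w a (s : 'I_N.+1) : val s = N -> @ffun_rcons N w a s = a.
Proof. by move=> sN; rewrite ffunE insubF // sN ltnn. Qed.

Lemma big_ffun_rcons (V : nmodType) N (F : {ffun 'I_N.+1 -> A} -> V) :
  \sum_w F w = \sum_(w : {ffun 'I_N -> A}) \sum_(a : A) F (ffun_rcons w a).
Proof.
rewrite pair_big /= (reindex (fun p => ffun_rcons p.1 p.2)) //=.
exists (fun w => ([ffun s => w (widen_ord (leqnSn N) s)], w ord_max)).
  move=> [w a] _ /=; congr pair; last exact: ffun_rcons_last.
  by apply/ffunP => s; rewrite ffunE ffun_rcons_widen.
move=> w _; apply/ffunP => s; rewrite ffunE.
case: insubP => [s' _ s's|]; first by rewrite ffunE; congr (w _); apply: val_inj.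
move=> sN; congr (w _); apply/val_inj/eqP.
by rewrite /= eqn_leq leqNgt sN -ltnS ltn_ord.
Qed.

End FfunRcons.

Section PathRcons.
Variables (R : realType) (n : nat).
Local Notation A := ('I_3 * 'I_n)%type.
Variables (N : nat) (w : {ffun 'I_N -> A}) (a : A).

Lemma path_level_rcons y0 t : path_level y0 (ffun_rcons w a) t =
  path_level y0 w t + (if (N < t)%N then (a.1 : nat)%:Z - 1 else 0).
Proof.
rewrite /path_level big_mkcond big_ord_recr /= ffun_rcons_last //.
rewrite -addrA [in RHS]big_mkcond; congr (_ + (_ + _)).
by apply: eq_bigr => s _; rewrite ffun_rcons_widen.
Qed.

Lemma path_level0 y0 : path_level y0 w 0 = y0.
Proof. by rewrite /path_level big_pred0 ?addr0. Qed.

Lemma path_level_after y0 t : (N <= t)%N -> path_level y0 w t = path_level y0 w N.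
Proof.
move=> Nt; rewrite /path_level; congr (_ + _); apply: eq_bigl => s.
by rewrite ltn_ord (leq_trans (ltn_ord s) Nt).
Qed.

Lemma path_phase_rcons i0 t : path_phase i0 (ffun_rcons w a) t =
  if t == N.+1 then a.2 else path_phase i0 w t.
Proof.
case: t => [|t] //=; rewrite eqSS.
case: insubP => [s tN st|tN]; case: insubP => [s' tN' s't|tN'] //=.
- by rewrite (ltn_eqF tN') (ffun_rcons_val _ _ (etrans st (esym s't))).
- have tN'' : t = N by apply/eqP; rewrite eqn_leq -ltnS tN leqNgt tN'.
  by rewrite tN'' eqxx ffun_rcons_last // st.
- by move: tN; rewrite ltnS ltnW.
- by rewrite ifN //; apply: contra tN => /eqP ->.
Qed.

Lemma path_prob_rcons (Lm L0 Lp : 'M[R]_n) y0 i0 :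
  path_prob Lm L0 Lp y0 i0 (ffun_rcons w a) = path_prob Lm L0 Lp y0 i0 w *
   qbd_tr Lm L0 Lp (path_level y0 w N)%:~R (path_phase i0 w N)
     (path_level y0 w N + ((a.1 : nat)%:Z - 1))%:~R a.2.
Proof.
rewrite /path_prob big_ord_recr; congr (_ * _).
  apply: eq_bigr => t _; have tN := ltn_ord t.
  rewrite !path_level_rcons !path_phase_rcons [nat_of_ord _]/= ltnNge (ltnW tN).
  by rewrite ltnNge tN eqSS !addr0 !ltn_eqF // ltnS ltnW.
rewrite !path_level_rcons !path_phase_rcons /= ltnn ltnSn eqxx (ltn_eqF (ltnSn N)).
by rewrite addr0 (path_level_after _ (leqnSn N)).
Qed.

End PathRcons.

Lemma sum_moves (V : nmodType) n (F : 'I_3 * 'I_n -> V) :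
  \sum_a F a =
  \sum_i (F (@Ordinal 3 0 isT, i) + F (@Ordinal 3 1 isT, i) + F (@Ordinal 3 2 isT, i)).
Proof.
rewrite (eq_bigr (fun a => F (a.1, a.2))) => [|[] //].
rewrite -(pair_bigA _ (fun d i => F (d, i))) /= !big_ord_recl big_ord0 addr0.
rewrite -!big_split /=; apply: eq_bigr => i _.
by rewrite addrA; congr (F (_, _) + F (_, _) + F (_, _)); apply: val_inj.
Qed.

Lemma sum_mul_delta (R : pzSemiRingType) n (x : 'I_n) (F : 'I_n -> R) :
  \sum_i F i * (i == x)%:R = F x.
Proof.
rewrite (bigD1 x) //= eqxx mulr1 big1 ?addr0 // => i /negbTE ->; exact: mulr0.
Qed.

Lemma sum_delta_andb (R : pzSemiRingType) n (x : 'I_n) (b : bool) :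
  \sum_i ((x == i) && b)%:R = b%:R :> R.
Proof.
rewrite (bigD1 x) //= eqxx big1 ?addr0 //.
by move=> i; rewrite eq_sym => /negbTE ->.
Qed.

Section PathRecursion.
Variables (R : realType) (n : nat) (S : {set 'I_n}).
Variables (m : nat -> R) (j : nat -> 'I_n) (i0 : 'I_n) (Cm C0 Cp : 'M[R]_n).
Local Notation A := ('I_3 * 'I_n)%type.
Local Notation lev w := (path_level 1 w).
Local Notation phase w := (path_phase i0 w).
Local Notation prob w := (path_prob Cm C0 Cp 1 i0 w).

Definition tracked N (w : {ffun 'I_N -> A}) k :=
  (nchanges (lev w) N == k) && epochs_match S m j (lev w) (phase w) N.

(* [occupation N k i]: probability that at time N the phase is i, exactly k
   level changes have occurred and every epoch so far matches (m, j);
   [arrival] moreover requires N to be an epoch. *)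
Definition occupation N k i :=
  \sum_(w : {ffun 'I_N -> A}) prob w * ((phase w N == i) && tracked w k)%:R.

Definition arrival N k i :=
  \sum_(w : {ffun 'I_N -> A}) prob w * [&& phase w N == i, epoch (lev w) N & tracked w k]%:R.

Definition move_mx (d : nat) := if d == 0%N then Cm else if d == 1%N then C0 else Cp.

Definition jump k i i' :=
  Cp i i' * (matches S m j (level_of S m j k + 1) i' k.+1)%:R +
  Cm i i' * (matches S m j (level_of S m j k - 1) i' k.+1)%:R.

Lemma qbd_tr_move (x : R) i (d : 'I_3) i' :
  qbd_tr Cm C0 Cp x i (x + ((d : nat)%:Z - 1)%:~R) i' = move_mx d i i'.
Proof.
rewrite /qbd_tr /move_mx; case: d => -[|[|[|//]]] _ /=.
- rewrite (_ : ((0%:Z - 1)%:~R : R) = -1) // ifF; last by apply/eqP => ?; lra.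
  by rewrite ifF ?eqxx //; apply/eqP => ?; lra.
- by rewrite subrr addr0 ifF ?eqxx //; apply/eqP => ?; lra.
- by rewrite (_ : ((2%:Z - 1)%:~R : R) = 1) // eqxx.
Qed.

Section LastMove.
Variables (N : nat) (w : {ffun 'I_N -> A}) (a : A).

Lemma lev_rcons t : (t <= N)%N -> lev (ffun_rcons w a) t = lev w t.
Proof. by move=> tN; rewrite path_level_rcons ltnNge tN addr0. Qed.

Lemma lev_rcons_last : lev (ffun_rcons w a) N.+1 = lev w N + ((a.1 : nat)%:Z - 1).
Proof. by rewrite path_level_rcons ltnSn (path_level_after w _ (leqnSn N)). Qed.

Lemma phase_rcons t : (t <= N)%N -> phase (ffun_rcons w a) t = phase w t.
Proof. by move=> tN; rewrite path_phase_rcons ifF // ltn_eqF. Qed.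

Lemma phase_rcons_last : phase (ffun_rcons w a) N.+1 = a.2.
Proof. by rewrite path_phase_rcons eqxx. Qed.

Lemma epoch_rcons_last : epoch (lev (ffun_rcons w a)) N.+1 = ((a.1 : nat) != 1%N).
Proof.
rewrite /= lev_rcons_last lev_rcons // -subr_eq0 addrAC subrr add0r.
by rewrite subr_eq0.
Qed.

Lemma tracked_rcons k : tracked (ffun_rcons w a) k =
  [&& (nchanges (lev w) N + ((a.1 : nat) != 1%N) == k)%N,
      epochs_match S m j (lev w) (phase w) N &
      ((a.1 : nat) != 1%N) ==>
        matches S m j (lev w N + ((a.1 : nat)%:Z - 1))%:~R a.2 (nchanges (lev w) N).+1].
Proof.
have lev_eq : {in [pred t | (t <= N)%N], lev (ffun_rcons w a) =1 lev w}.
  by move=> t; exact: lev_rcons.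
have phase_eq : {in [pred t | (t <= N)%N], phase (ffun_rcons w a) =1 phase w}.
  by move=> t; exact: phase_rcons.
have ncN : nchanges (lev (ffun_rcons w a)) N.+1 = (nchanges (lev w) N + (a.1 != 1%N :> nat))%N.
  by rewrite -epoch_rcons_last /= (nchanges_eq lev_eq) ?inE.
rewrite /tracked epochs_matchS (epochs_match_eq _ _ _ lev_eq phase_eq).
rewrite epoch_rcons_last ncN lev_rcons_last phase_rcons_last.
by case: (a.1 != 1%N :> nat); rewrite ?addn1.
Qed.

Lemma prob_rcons : prob (ffun_rcons w a) = prob w * move_mx a.1 (phase w N) a.2.
Proof. by rewrite path_prob_rcons intrD qbd_tr_move. Qed.

End LastMove.

Lemma sum_paths_rcons N (F : {ffun 'I_N.+1 -> A} -> R) :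
  \sum_w prob w * F w = \sum_(w : {ffun 'I_N -> A})
     prob w * \sum_(a : A) move_mx a.1 (phase w N) a.2 * F (ffun_rcons w a).
Proof.
rewrite big_ffun_rcons; apply: eq_bigr => w _; rewrite mulr_sumr.
by apply: eq_bigr => a _; rewrite prob_rcons mulrA.
Qed.

Lemma sum_paths_by_phase N k (G : 'I_n -> R) :
  \sum_(w : {ffun 'I_N -> A}) prob w * ((tracked w k)%:R * G (phase w N)) =
  \sum_i occupation N k i * G i.
Proof.
transitivity (\sum_(w : {ffun 'I_N -> A}) \sum_i
    prob w * ((tracked w k)%:R * G i) * (i == phase w N)%:R).
  by apply: eq_bigr => w _; rewrite sum_mul_delta.
rewrite exchange_big; apply: eq_bigr => i _; rewrite /occupation mulr_suml.
by apply: eq_bigr => w _; rewrite eq_sym -mulnb natrM; ring.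
Qed.

Lemma occupation_arrival0 k i : occupation 0 k i = arrival 0 k i.
Proof. by apply: eq_bigr. Qed.

Lemma arrival0 k i :
  arrival 0 k i = [&& i == i0, k == 0%N & matches S m j 1 i0 0]%:R.
Proof.
rewrite /arrival (big_pred1 [ffun=> (ord0, i0)]); last first.
  by move=> w; apply/esym/eqP/ffunP => -[].
rewrite /path_prob big_ord0 mul1r /tracked epochs_match0 !path_level0 /=.
by rewrite eq_sym (eq_sym 0%N k).
Qed.

Lemma arrivalS0 N i : arrival N.+1 0 i = 0.
Proof.
apply: big1 => w _; rewrite /tracked /=.
by case: (lev w N.+1 != lev w N); rewrite ?addn1 ?andbF ?mulr0.
Qed.

Lemma occupationS N k i' :
  occupation N.+1 k i' = \sum_i occupation N k i * C0 i i' + arrival N.+1 k i'.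
Proof.
have -> : occupation N.+1 k i' = \sum_(w : {ffun 'I_N.+1 -> A}) prob w *
    [&& phase w N.+1 == i', ~~ epoch (lev w) N.+1 & tracked w k]%:R + arrival N.+1 k i'.
  rewrite /occupation /arrival -big_split /=; apply: eq_bigr => w _.
  rewrite -mulrDr; congr (_ * _).
  case: (phase w N.+1 == i'); case: (tracked w k); case: (lev w N.+1 != lev w N);
  by rewrite /= ?add0r ?addr0.
congr (_ + _); rewrite sum_paths_rcons -sum_paths_by_phase.
apply: eq_bigr => w _; congr (_ * _).
under eq_bigr do rewrite phase_rcons_last epoch_rcons_last tracked_rcons.
rewrite sum_moves (eq_bigr (fun i => (tracked w k)%:R * C0 (phase w N) i * (i == i')%:R)).
  exact: sum_mul_delta.
move=> i _ /=; rewrite !andbF !mulr0 addr0 add0r addn0 andbT -/(tracked w k).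
by rewrite -mulnb natrM [move_mx 1]/move_mx /=; ring.
Qed.

Lemma arrivalSS N k i' : arrival N.+1 k.+1 i' = \sum_i occupation N k i * jump k i i'.
Proof.
rewrite /arrival sum_paths_rcons -sum_paths_by_phase.
apply: eq_bigr => w _; congr (_ * _).
under eq_bigr do rewrite phase_rcons_last epoch_rcons_last tracked_rcons.
rewrite sum_moves (eq_bigr (fun i => (tracked w k)%:R * jump k (phase w N) i * (i == i')%:R)).
  exact: sum_mul_delta.
move=> i _ /=; rewrite !andbF !mulr0 addr0 !addn1 !eqSS /tracked.
have [nk|_] := eqVneq (nchanges (lev w) N) k; last by rewrite /= !andbF !mulr0 !mul0r addr0.
have [ok|_] := boolP (epochs_match S m j (lev w) (phase w) N); last first.
  by rewrite /= !andbF !mulr0 !mul0r addr0.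
rewrite !(intrD _ (lev w N)) (epochs_match_level ok) nk.
rewrite (_ : ((0%:Z - 1)%:~R : R) = -1) //.
rewrite (_ : ((2%:Z - 1)%:~R : R) = 1) // /jump /= -!mulnb !natrM.
rewrite [move_mx 0]/move_mx [move_mx 2]/move_mx /=; ring.
Qed.

End PathRecursion.

Lemma cvg_sum (R : realType) (I : finType) (f : I -> nat -> R) (a : I -> R) :
  (forall i, f i n @[n --> \oo] --> a i) -> \sum_i f i n @[n --> \oo] --> \sum_i a i.
Proof. by move=> fa; apply: cvg_big => //; exact: add_continuous. Qed.

Section SubstochasticMatrix.
Variables (R : realType) (n : nat) (C : 'M[R]_n).
Hypothesis C_ge0 : forall i j, 0 <= C i j.
Hypothesis row_C_lt1 : forall i, \sum_j C i j < 1.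

Lemma row_C_bound : exists2 r : R, r < 1 & forall i, \sum_j C i j <= r.
Proof.
exists (\big[Order.max/0]_i \sum_j C i j); last by move=> i; exact: le_bigmax.
by apply/bigmax_ltP; split => //; exact: ltr01.
Qed.

Lemma unitmx_1B : (1%:M - C) \in unitmx.
Proof.
have [r r1 rowr] := row_C_bound.
rewrite unitmxE unitfE; apply/negP => /det0P [v /eqP v_neq0 /eqP].
rewrite mulmxBr mulmx1 subr_eq0 => /eqP vC; apply: v_neq0.
pose a := \sum_i `|v 0 i|.
have a_le : a <= r * a.
  apply: le_trans (_ : \sum_i' \sum_i `|v 0 i| * C i i' <= _).
    apply: ler_sum => i' _; rewrite {1}vC mxE.
    apply: le_trans (ler_norm_sum _ _ _) _; apply: ler_sum => i _.
    by rewrite normrM (ger0_norm (C_ge0 _ _)).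
  rewrite exchange_big mulr_sumr; apply: ler_sum => i _.
  by rewrite -mulr_sumr mulrC ler_wpM2r.
have a_ge0 : 0 <= a by apply: sumr_ge0 => i _; exact: normr_ge0.
have a0 : a = 0 by nra.
apply/rowP => i; rewrite mxE; apply/normr0_eq0.
by move/psumr_eq0P: a0 => -> //; move=> k _.
Qed.

Section Resolvent.
Variables (u e : nat -> 'I_n -> R) (E : 'I_n -> R).
Hypotheses (u_ge0 : forall N i, 0 <= u N i) (e_ge0 : forall N i, 0 <= e N i).
Hypothesis u0 : forall i, u 0%N i = e 0%N i.
Hypothesis uS : forall N i', u N.+1 i' = \sum_i u N i * C i i' + e N.+1 i'.
Hypothesis eE : forall i, series (e ^~ i) @ \oo --> E i.

Lemma series_uS M i' :
  series (u ^~ i') M.+1 = \sum_i series (u ^~ i) M * C i i' + series (e ^~ i') M.+1.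
Proof.
rewrite !seriesEnat /= !big_nat_recl // u0 addrCA; congr (_ + _).
under eq_bigr do rewrite uS.
rewrite big_split /= exchange_big; congr (_ + _).
by apply: eq_bigr => i _; rewrite mulr_suml.
Qed.

(* The partial sums increase and, as the rows of C sum to at most r < 1, their
   total stays below (\sum_i E i) / (1 - r). *)
Lemma is_cvg_series_u i : cvgn (series (u ^~ i)).
Proof.
have [r r1 rowr] := row_C_bound.
have nd_u i' : nondecreasing_seq (series (u ^~ i')).
  by apply: nondecreasing_series => N _ _; exact: u_ge0.
have e_le i' M : series (e ^~ i') M <= E i'.
  rewrite -(cvg_lim _ (@eE i')) //; apply: nondecreasing_cvgn_le; last exact: cvgP (@eE i').
  by apply: nondecreasing_series => N _ _; exact: e_ge0.
set B := \sum_i E i.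
have total_le M : \sum_i series (u ^~ i) M <= B / (1 - r).
  set s := \sum_i series (u ^~ i) M.
  have s_le : s <= \sum_i series (u ^~ i) M.+1 by apply: ler_sum => i' _; exact: nd_u.
  have sS_le : \sum_i series (u ^~ i) M.+1 <= r * s + B.
    under eq_bigr do rewrite series_uS.
    rewrite big_split /=; apply: lerD; last by apply: ler_sum => i' _; exact: e_le.
    rewrite exchange_big /= /s mulr_sumr; apply: ler_sum => i' _.
    by rewrite -mulr_sumr mulrC ler_wpM2r // sumr_ge0 // => N _; exact: u_ge0.
  by rewrite ler_pdivlMr ?subr_gt0 //; nra.
apply: nondecreasing_is_cvgn => //; exists (B / (1 - r)) => _ [M _ <-].
apply: le_trans (total_le M); rewrite (bigD1 i) //= lerDl.
by apply: sumr_ge0 => k _; apply: sumr_ge0 => N _; exact: u_ge0.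
Qed.

Lemma cvg_series_resolvent i' :
  series (u ^~ i') @ \oo --> \sum_l E l * invmx (1%:M - C) l i'.
Proof.
pose U i := limn (series (u ^~ i)).
have U_fix i : U i = \sum_k U k * C k i + E i.
  have cvgS : series (u ^~ i) M.+1 @[M --> \oo] --> U i.
    by rewrite cvg_shiftS; exact: is_cvg_series_u.
  rewrite -(cvg_lim _ cvgS) //; under eq_fun do rewrite series_uS.
  apply: cvg_lim => //; apply: cvgD.
    by apply: cvg_sum => k; apply: cvgMr_tmp; exact: is_cvg_series_u.
  by rewrite (cvg_shiftS (series (e ^~ i))); exact: eE.
have rowU : \row_i U i = \row_i E i *m invmx (1%:M - C).
  apply: (canRL (mulmxK unitmx_1B)); apply/rowP => i.
  rewrite mulmxBr mulmx1 !mxE (U_fix i).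
  have -> : \sum_k (\row_i U i) 0 k * C k i = \sum_k U k * C k i.
    by apply: eq_bigr => k _; rewrite mxE.
  by rewrite addrAC subrr add0r.
rewrite (_ : \sum_l _ = U i'); first exact: is_cvg_series_u.
have /rowP/(_ i') := rowU; rewrite !mxE => ->.
by apply: eq_bigr => l _; rewrite mxE.
Qed.

End Resolvent.

End SubstochasticMatrix.

Lemma cvg_series_shift (R : realType) n (u e : nat -> 'I_n -> R) (X : 'I_n -> 'I_n -> R)
    (U : 'I_n -> R) :
  (forall i, e 0%N i = 0) -> (forall N i', e N.+1 i' = \sum_i u N i * X i i') ->
  (forall i, series (u ^~ i) @ \oo --> U i) ->
  forall i', series (e ^~ i') @ \oo --> \sum_i U i * X i i'.
Proof.
move=> e0 eS uU i'; rewrite -cvg_shiftS.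
have -> : (fun M => series (e ^~ i') M.+1) = (fun M => \sum_i series (u ^~ i) M * X i i').
  apply/funext => M; rewrite !seriesEnat /= big_nat_recl // e0 add0r.
  under eq_bigr do rewrite eS.
  by rewrite exchange_big; apply: eq_bigr => i _; rewrite mulr_suml.
by apply: cvg_sum => i; exact: cvgMr_tmp.
Qed.

Section QBDTransitions.
Variables (R : realType) (n : nat) (Lm L0 Lp : 'M[R]_n).

Lemma qbd_tr_up x i x' i' : Lm i i' = 0 -> L0 i i' = 0 ->
  qbd_tr Lm L0 Lp x i x' i' = Lp i i' * (x' == x + 1)%:R.
Proof.
move=> Lm0 L00; rewrite /qbd_tr Lm0 L00 !if_same.
by case: (x' == x + 1); rewrite ?mulr1 ?mulr0.
Qed.

Lemma qbd_tr_stay x i x' i' : Lm i i' = 0 -> Lp i i' = 0 ->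
  qbd_tr Lm L0 Lp x i x' i' = L0 i i' * (x' == x)%:R.
Proof.
move=> Lm0 Lp0; rewrite /qbd_tr Lm0 Lp0 if_same.
have [->|_] := eqVneq x' x; last by rewrite if_same mulr0.
by rewrite ifF ?mulr1 //; apply/eqP => ?; lra.
Qed.

Lemma qbd_tr_down x i x' i' : L0 i i' = 0 -> Lp i i' = 0 ->
  qbd_tr Lm L0 Lp x i x' i' = Lm i i' * (x' == x - 1)%:R.
Proof.
move=> L00 Lp0; rewrite /qbd_tr L00 Lp0.
have [->|_] := eqVneq x' (x - 1); last by rewrite !if_same mulr0.
by rewrite !ifF ?mulr1 //; apply/eqP => ?; lra.
Qed.

Definition qbd_seq_prob (x0 : R) (i0 : 'I_n) (m : nat -> R) (j : nat -> 'I_n) K :=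
  ((m 0%N == x0) && (j 0%N == i0))%:R *
  \prod_(k < K) qbd_tr Lm L0 Lp (m k) (j k) (m k.+1) (j k.+1).

End QBDTransitions.

Lemma eseries_EFin (R : realType) (f : nat -> R) (l : R) :
  series f @ \oo --> l -> (\sum_(0 <= N <oo) (f N)%:E = l%:E)%E.
Proof.
move=> fl; rewrite -(cvg_lim _ fl) // -EFin_lim; last exact: cvgP fl.
by congr (limn _); apply/funext => M; rewrite /= sumEFin seriesEnat.
Qed.

Section EmbeddedQBD.
Variables (R : realType) (n : nat) (S : {set 'I_n}) (i0 : 'I_n) (Cm C0 Cp K : 'M[R]_n).
Hypothesis i0S : i0 \in S.
Hypothesis C0_ge0 : forall i j, 0 <= C0 i j.
Hypothesis row_C0_lt1 : forall i, \sum_j C0 i j < 1.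
Hypothesis Cm_ge0 : forall i j, 0 <= Cm i j.
Hypothesis Cp_ge0 : forall i j, 0 <= Cp i j.
Hypothesis Cm_in : forall i j, j \in S -> Cm i j = 0.
Hypothesis Cp_notin : forall i j, j \notin S -> Cp i j = 0.
Hypothesis K_def : K = invmx (1%:M - C0) *m (Cm + Cp).

Definition D_down := \matrix_(i, j) (if (i \notin S) && (j \notin S) then K i j else 0).
Definition D_flip := \matrix_(i, j) (if (i \in S) != (j \in S) then K i j else 0).
Definition D_up := \matrix_(i, j) (if (i \in S) && (j \in S) then K i j else 0).

Variables (m : nat -> R) (j : nat -> 'I_n).
Local Notation inv := (invmx (1%:M - C0)).
Local Notation level_of := (level_of S m j).
Local Notation jump := (jump S m j Cm Cp).
Local Notation occupation := (occupation S m j i0 Cm C0 Cp).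
Local Notation arrival := (arrival S m j i0 Cm C0 Cp).
Local Notation embedded_prob := (qbd_seq_prob D_down D_flip D_up 2^-1 i0 m j).

Lemma sum_inv_jump k i' : \sum_i inv (j k) i * jump k i i' =
  (i' == j k.+1)%:R * K (j k) i' * (if i' \in S then (level_of k + 1 == level_of k.+1)%:R
                                    else (level_of k - 1 == level_of k.+1)%:R).
Proof.
have -> : K (j k) i' = \sum_i inv (j k) i * (Cm i i' + Cp i i').
  by rewrite K_def mxE; apply: eq_bigr => i _; rewrite mxE.
rewrite mulr_sumr mulr_suml; apply: eq_bigr => i _; rewrite /jump !matchesE.
case: (boolP (i' \in S)) => i'S /=; first rewrite Cm_in //; last rewrite Cp_notin //.
all: by rewrite -!mulnb !natrM; ring.
Qed.

Lemma embedded_step k i' : \sum_i inv (j k) i * jump k i i' =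
  (i' == j k.+1)%:R * qbd_tr D_down D_flip D_up (m k) (j k) (m k.+1) (j k.+1).
Proof.
rewrite sum_inv_jump; have [->|_] := eqVneq i' (j k.+1); last by rewrite !mul0r.
rewrite /level_of; case jS: (j k \in S); case jS': (j k.+1 \in S);
  [rewrite qbd_tr_up | rewrite qbd_tr_stay | rewrite qbd_tr_stay | rewrite qbd_tr_down];
  try by rewrite mxE jS jS'.
all: rewrite mxE jS jS' /= !mul1r; congr (_ * _); do 2!apply: congr1.
all: by apply/eqP/eqP => ?; lra.
Qed.

Lemma path_prob_ge0 N (w : {ffun 'I_N -> 'I_3 * 'I_n}) : 0 <= path_prob Cm C0 Cp 1 i0 w.
Proof.
apply: prodr_ge0 => t _; rewrite /qbd_tr.
by do 3!case: ifP => _ //.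
Qed.

Lemma cvg_series_arrival k i :
  series (fun N => arrival N k i) @ \oo --> embedded_prob k * (i == j k)%:R.
Proof.
elim: k i => [|k IH] i.
  have arr0 M : series (fun N => arrival N 0 i) M.+1 = arrival 0 0 i.
    rewrite seriesEnat /= big_nat_recl // big1 ?addr0 // => N _; exact: arrivalS0.
  rewrite -cvg_shiftS; under eq_fun do rewrite arr0.
  rewrite (_ : embedded_prob 0 * _ = arrival 0 0 i); first exact: cvg_cst.
  rewrite arrival0 matchesE /qbd_seq_prob big_ord0 mulr1 /level_of /=.
  have [ji0|ne] := eqVneq (j 0%N) i0; last first.
    by rewrite andbF /= andbF mul0r.
  rewrite ji0 i0S !andbT -natrM mulnb andbC; do 2!apply: congr1.
  by congr (_ && _); apply/eqP/eqP => ?; lra.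
have occ_ge0 N i' : 0 <= occupation N k i'.
  by apply: sumr_ge0 => w _; apply: mulr_ge0 => //; exact: path_prob_ge0.
have arr_ge0 N i' : 0 <= arrival N k i'.
  by apply: sumr_ge0 => w _; apply: mulr_ge0 => //; exact: path_prob_ge0.
have occ := cvg_series_resolvent C0_ge0 row_C0_lt1 occ_ge0 arr_ge0
  (@occupation_arrival0 _ _ S m j i0 Cm C0 Cp k) (@occupationS _ _ S m j i0 Cm C0 Cp ^~ k) IH.
have arr0 i' : arrival 0 k.+1 i' = 0 by rewrite arrival0 /= andbF.
have := cvg_series_shift (e := fun N i => arrival N k.+1 i) arr0
  (fun N i' => @arrivalSS _ _ S m j i0 Cm C0 Cp N k i') occ (i' := i).
congr (_ --> _); under eq_bigr do under eq_bigr do rewrite mulrAC.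
under eq_bigr do rewrite sum_mul_delta -mulrA.
rewrite -mulr_sumr embedded_step /qbd_seq_prob big_ord_recr /=; ring.
Qed.

Lemma sum_paths_tau_event N K' :
  \sum_(w : {ffun 'I_N -> 'I_3 * 'I_n}) path_prob Cm C0 Cp 1 i0 w *
    (is_tau (path_level 1 w) K' N &&
     [forall k : 'I_K'.+1, forall t : 'I_N.+1, is_tau (path_level 1 w) k t ==>
        ((Mval R S (path_level 1 w t) (path_phase i0 w t) == m k) &&
         (path_phase i0 w t == j k))])%:R
  = \sum_i arrival N K' i.
Proof.
rewrite exchange_big; apply: eq_bigr => w _; rewrite tau_eventE -mulr_sumr.
by rewrite sum_delta_andb /tracked andbCA.
Qed.

Theorem embedded_qbd_path_prob K' :
  (\sum_(0 <= N <oo)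
     (\sum_(w : {ffun 'I_N -> 'I_3 * 'I_n})
        path_prob Cm C0 Cp 1 i0 w *
        ((is_tau (path_level 1 w) K' N &&
          [forall k : 'I_K'.+1, forall t : 'I_N.+1,
             is_tau (path_level 1 w) k t ==>
             ((Mval R S (path_level 1 w t) (path_phase i0 w t) == m k) &&
              (path_phase i0 w t == j k))]))%:R)%:E)%E
  = (embedded_prob K')%:E.
Proof.
apply: eseries_EFin; under eq_fun do rewrite sum_paths_tau_event.
have -> : series (fun N => \sum_i arrival N K' i) =
          fun M => \sum_i series (fun N => arrival N K' i) M.
  by apply/funext => M; rewrite !seriesEnat /= exchange_big.
by have := cvg_sum (fun i => cvg_series_arrival (k := K') (i := i)); rewrite sum_mul_delta.
Qed.

End EmbeddedQBD.

Section Generator.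
Variables (R : realType) (n : nat) (T : 'M[R]_n).
Hypothesis T_offdiag_ge0 : forall i j, i != j -> 0 <= T i j.
Hypothesis T_row0 : forall i, \sum_j T i j = 0.

Lemma Pmat_ge0 c : 0 < c -> (forall i, `|T i i| <= c) -> forall i k, 0 <= Pmat c T i k.
Proof.
move=> c_gt0 Tc i k; rewrite !mxE; have [<-|ik] := eqVneq i k; last first.
  by rewrite mulr0n add0r mulr_ge0 ?invr_ge0 ?(ltW c_gt0) // T_offdiag_ge0.
have Tii : - c <= T i i by move: (Tc i); rewrite ler_norml => /andP [].
have : 0 <= c^-1 * (c + T i i) by apply: mulr_ge0; [rewrite invr_ge0 ltW | lra].
by rewrite mulrDr mulVf ?gt_eqF.
Qed.

Lemma sum_Pmat (P : pred 'I_n) c i :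
  \sum_(k | P k) Pmat c T i k = (P i)%:R + c^-1 * \sum_(k | P k) T i k.
Proof.
under eq_bigr do rewrite !mxE; rewrite big_split /= mulr_sumr; congr (_ + _).
rewrite big_mkcond (bigD1 i) //= eqxx big1 ?addr0 => [|k /negbTE]; last first.
  by rewrite eq_sym => ->; rewrite if_same.
by case: (P i).
Qed.

Lemma sum_Pmat_mix_lt2 (P : pred 'I_n) a b i : P i -> 0 < a -> 0 < b -> `|T i i| <= b ->
  \sum_k (if P k then Pmat a T i k else Pmat b T i k) < 2.
Proof.
(* With t the rate from i out of P, the sum is 1 + t / b - t / a, where
   0 <= t <= |T i i| <= b. *)
move=> Pi a_gt0 b_gt0 Tb; rewrite (bigID P) /=.
rewrite (eq_bigr (fun k => Pmat a T i k)) => [|k -> //].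
rewrite [X in _ + X](eq_bigr (fun k => Pmat b T i k)) => [|k /negbTE -> //].
rewrite !sum_Pmat /= Pi /=; set t := \sum_(k | ~~ P k) T i k.
have sP : \sum_(k | P k) T i k = - t.
  by have := T_row0 i; rewrite (bigID P) /= => /eqP; rewrite addr_eq0 => /eqP.
have t_ge0 : 0 <= t.
  apply: sumr_ge0 => k Pk; apply: T_offdiag_ge0; apply: contraNneq Pk => <-; exact: Pi.
have t_le : t <= b.
  have : T i i <= \sum_(k | P k) T i k.
    rewrite (bigD1 i) //= lerDl sumr_ge0 // => k /andP [_ ki].
    by apply: T_offdiag_ge0; rewrite eq_sym.
  by move: Tb; rewrite sP ler_norml => /andP [? _]; lra.
have tb : b^-1 * t <= 1 by rewrite mulrC ler_pdivrMr // mul1r.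
rewrite sP; have [->|t_neq0] := eqVneq t 0; first by rewrite oppr0 !mulr0; lra.
have : 0 < a^-1 * t by rewrite mulr_gt0 ?invr_gt0 // lt_neqAle eq_sym t_neq0.
lra.
Qed.

End Generator.

Section GeneratorBlocks.
Variables (R : realType) (n : nat) (S : {set 'I_n}) (T : 'M[R]_n) (lam mu : R).
Hypothesis T_gen : is_generator T.
Hypotheses (lam_gt0 : 0 < lam) (mu_gt0 : 0 < mu).
Hypotheses (T_lam : forall i, `|T i i| <= lam) (T_mu : forall i, `|T i i| <= mu).

Definition stay_mx :=
  \matrix_(i, j) (if j \in S then 2^-1 * Pmat mu T i j else 2^-1 * Pmat lam T i j).
Definition switch_mx :=
  \matrix_(i, j) (if j \in S then 2^-1 * Pmat lam T i j else 2^-1 * Pmat mu T i j).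
Definition down_mx := \matrix_(i, j) (if j \in S then 0 else 2^-1 * Pmat mu T i j).
Definition up_mx := \matrix_(i, j) (if j \in S then 2^-1 * Pmat lam T i j else 0).
Definition A_mx :=
  \matrix_(i, j) ((i == j)%:R - (if j \in S then mu^-1 else lam^-1) * T i j).
Definition B_mx :=
  \matrix_(i, j) ((i == j)%:R + (if j \in S then lam^-1 else mu^-1) * T i j).

Let Pl_ge0 := Pmat_ge0 T_gen.1 lam_gt0 T_lam.
Let Pm_ge0 := Pmat_ge0 T_gen.1 mu_gt0 T_mu.
Let half_ge0 : 0 <= 2^-1 :> R. Proof. by rewrite invr_ge0 ler0n. Qed.

Lemma stay_mx_ge0 i j : 0 <= stay_mx i j.
Proof. by rewrite mxE; case: ifP => _; rewrite mulr_ge0. Qed.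

Lemma down_mx_ge0 i j : 0 <= down_mx i j.
Proof. by rewrite mxE; case: ifP => _; rewrite ?mulr_ge0. Qed.

Lemma up_mx_ge0 i j : 0 <= up_mx i j.
Proof. by rewrite mxE; case: ifP => _; rewrite ?mulr_ge0. Qed.

Lemma row_stay_mx_lt1 i : \sum_j stay_mx i j < 1.
Proof.
under eq_bigr do rewrite mxE -fun_if.
rewrite -mulr_sumr mulrC ltr_pdivrMr ?ltr0n // mul1r.
have [iS|iS] := boolP (i \in S).
  exact: sum_Pmat_mix_lt2 T_gen.1 T_gen.2 _ _ _ _ iS mu_gt0 lam_gt0 (T_lam i).
under eq_bigr do rewrite -if_neg.
exact: sum_Pmat_mix_lt2 T_gen.1 T_gen.2 (fun k => k \notin S) _ _ _ iS lam_gt0 mu_gt0 (T_mu i).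
Qed.

Lemma unitmx_1B_stay : (1%:M - stay_mx) \in unitmx.
Proof. exact: unitmx_1B stay_mx_ge0 row_stay_mx_lt1. Qed.

Lemma A_mxE : A_mx = 2%:R *: (1%:M - stay_mx).
Proof.
by apply/matrixP => i j; rewrite /Pmat !mxE; case: (j \in S); lra.
Qed.

Lemma B_mxE : B_mx = 2%:R *: switch_mx.
Proof.
by apply/matrixP => i j; rewrite /Pmat !mxE; case: (j \in S); lra.
Qed.

Lemma unitmx_A : A_mx \in unitmx.
Proof. by rewrite A_mxE unitmxZ ?unitfE ?pnatr_eq0 // unitmx_1B_stay. Qed.

Lemma invmx_stay_switch : invmx (1%:M - stay_mx) *m switch_mx = invmx A_mx *m B_mx.
Proof.
rewrite A_mxE B_mxE invmxZ -?A_mxE ?unitmx_A // -scalemxAl -scalemxAr scalerA.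
by rewrite mulVf ?pnatr_eq0 // scale1r.
Qed.

Lemma switch_mxE : switch_mx = down_mx + up_mx.
Proof.
by apply/matrixP => i j; rewrite !mxE; case: (j \in S); rewrite ?addr0 ?add0r.
Qed.

End GeneratorBlocks.

Theorem theorem6 (R : realType) (n : nat) (Splus : {set 'I_n}) (T : 'M[R]_n)
    (lam mu : R) (i0 : 'I_n) :
  is_generator T ->
  (Splus != finset.set0) -> (~: Splus != finset.set0) ->
  0 < lam -> 0 < mu ->
  (forall i, `|T i i| <= lam) -> (forall i, `|T i i| <= mu) ->
  i0 \in Splus ->
  let Pl := Pmat lam T in
  let Pm := Pmat mu T in
  (* blocks of the QBD {(Y_n, kappa_n)} *)
  let Cm := \matrix_(i, j) (if j \in Splus then 0 else 2^-1 * Pm i j) in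
  let C0 := \matrix_(i, j) (if j \in Splus then 2^-1 * Pm i j else 2^-1 * Pl i j) in
  let Cp := \matrix_(i, j) (if j \in Splus then 2^-1 * Pl i j else 0) in
  (* [E G; H F] *)
  let K := invmx (1%:M - C0) *m
           (\matrix_(i, j) (if j \in Splus then 2^-1 * Pl i j else 2^-1 * Pm i j)) in
  let A' := \matrix_(i, j) ((i == j)%:R -
              (if j \in Splus then mu^-1 else lam^-1) * T i j) in
  let B' := \matrix_(i, j) ((i == j)%:R +
              (if j \in Splus then lam^-1 else mu^-1) * T i j) in
  (* D_{-1} = [0 0; 0 F], D_0 = [0 G; H 0], D_1 = [E 0; 0 0] *)
  let Dm := \matrix_(i, j) (if (i \notin Splus) && (j \notin Splus) then K i j else 0) in
  let D0 := \matrix_(i, j) (if (i \in Splus) != (j \in Splus) then K i j else 0) in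
  let Dp := \matrix_(i, j) (if (i \in Splus) && (j \in Splus) then K i j else 0) in
  [/\ (1%:M - C0) \in unitmx,
      A' \in unitmx,
      K = invmx A' *m B' &
      (* the embedded process (M_{tau_k}, kappa_{tau_k}) is the QBD with blocks
         D_{-1}, D_0, D_1 started from (1/2, i0): for all K' and all
         (m_k, j_k)_{k <= K'}, P[tau_{K'} < oo, (M_{tau_k}, kappa_{tau_k}) = (m_k, j_k)
         for all k <= K'] equals the QBD path probability *)
      forall (K' : nat) (m : nat -> R) (j : nat -> 'I_n),
        (\sum_(0 <= N <oo)
           (\sum_(w : {ffun 'I_N -> 'I_3 * 'I_n})
              path_prob Cm C0 Cp 1 i0 w *
              ((is_tau (path_level 1 w) K' N &&
                [forall k : 'I_K'.+1, forall t : 'I_N.+1,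
                   is_tau (path_level 1 w) k t ==>
                   ((Mval R Splus (path_level 1 w t) (path_phase i0 w t) == m k) &&
                    (path_phase i0 w t == j k))]))%:R)%:E)%E
        = (((m 0%N == 2^-1) && (j 0%N == i0))%:R *
           \prod_(k < K') qbd_tr Dm D0 Dp (m k) (j k) (m k.+1) (j k.+1))%:E ].
Proof.
move=> T_gen _ _ lam_gt0 mu_gt0 T_lam T_mu i0S.
have stay_ge0 := stay_mx_ge0 Splus T_gen lam_gt0 mu_gt0 T_lam T_mu.
have stay_lt1 := row_stay_mx_lt1 Splus T_gen lam_gt0 mu_gt0 T_lam T_mu.
split.
- exact: unitmx_1B_stay T_gen lam_gt0 mu_gt0 T_lam T_mu.
- exact: unitmx_A T_gen lam_gt0 mu_gt0 T_lam T_mu.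
- exact: invmx_stay_switch T_gen lam_gt0 mu_gt0 T_lam T_mu.
move=> K' m j; apply: (embedded_qbd_path_prob (Cm := down_mx Splus T mu)
  (Cp := up_mx Splus T lam) i0S stay_ge0 stay_lt1).
- exact: down_mx_ge0 T_gen mu_gt0 T_mu.
- exact: up_mx_ge0 T_gen lam_gt0 T_lam.
- by move=> i k kS; rewrite mxE kS.
- by move=> i k kS; rewrite mxE (negbTE kS).
- by rewrite -switch_mxE.
Qed.
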